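(* Let $r\ge4$, $l\ge r$, $\alpha,\beta\in\mathbb N$ with $\alpha+\beta=l-(r-2)$, and let $(X(N_G,\Delta_G),\mathrm{orb}(\sigma_0))$ be the Gorenstein cyclic quotient singularity of type $\frac1l(1,\ldots,1,\alpha,\beta)$ (with $r-2$ weights equal to $1$). If this singularity admits a $T_{N_G}$-equivariant, crepant, full resolution, then $\gcd(\alpha,\beta,l)\in\{1,r-2\}$. Moreover, if $\gcd(\alpha,\beta,l)=1$, then $[\mathfrak t_1]_{r-2}=[\mathfrak t_2]_{r-2}=1$, where $\mathfrak t_1=\gcd(\alpha,l)$ and $\mathfrak t_2=\gcd(\beta,l)=\gcd(\alpha+(r-2),l)$.
   Context: For integers $\mu$ and $\nu\ge1$, $[\mu]_\nu$ is the unique integer in $\{0,\ldots,\nu-1\}$ congruent to $\mu$ mod $\nu$. Type $\frac1l(\alpha_1,\ldots,\alpha_r)$: $G\subset\mathrm{GL}(r,\mathbb C)$ is generated by $\mathrm{diag}(\zeta^{\alpha_1},\ldots,\zeta^{\alpha_r})$, $\zeta=e^{2\pi\sqrt{-1}/l}$; $N_G=\mathbb Z^r+\mathbb Z\frac1l(\alpha_1,\ldots,\alpha_r)^{\intercal}$, $\sigma_0$ the positive orthant of $\mathbb R^r$, $\Delta_G$ its face fan, $X(N_G,\Delta_G)=\mathbb C^r/G$ with torus $T_{N_G}$. A crepant $T_{N_G}$-equivariant full resolution is a proper birational toric morphism from a smooth toric variety given by a refinement of $\Delta_G$, with trivial discrepancy. *)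

(* Combinatorial (fan-theoretic) encoding of T_N-equivariant
   crepant full resolutions of C^r/G for a cyclic G of type 1/l(a_1,...,a_r). *)
From mathcomp Require Import all_boot all_order all_algebra.
Set Implicit Arguments. Unset Strict Implicit. Unset Printing Implicit Defensive.
Import Order.TTheory GRing.Theory Num.Theory.
Local Open Scope ring_scope.

(* vectors of N_G ⊗ Q = Q^r are row vectors 'rV[rat]_r *)
Notation vec r := 'rV[rat]_r.

Definition inNG (r l : nat) (a : 'I_r -> nat) (v : vec r) : Prop :=
  exists k : int, forall i : 'I_r, exists z : int,
    v 0 i = z%:~R + k%:~R * ((a i)%:R / l%:R).

Definition cone r (s : seq (vec r)) : vec r -> Prop :=
  fun x => exists c : 'I_(size s) -> rat,
    (forall i, 0 <= c i) /\ x = \sum_(i < size s) c i *: s`_i.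

Definition orthant r : vec r -> Prop := fun x => forall i, 0 <= x 0 i.

Definition dotv r (u x : vec r) : rat := \sum_i u 0 i * x 0 i.

Definition is_face r (F C : vec r -> Prop) : Prop :=
  exists u : vec r, (forall x, C x -> 0 <= dotv u x) /\
    (forall x, F x <-> (C x /\ dotv u x = 0)).

Definition is_Zbasis r l (a : 'I_r -> nat) (B : 'I_r -> vec r) : Prop :=
  (forall i, inNG l a (B i)) /\
  row_free (\matrix_(i < r) B i) /\
  (forall v, inNG l a v -> exists z : 'I_r -> int, v = \sum_i (z i)%:~R *: B i).

Definition smooth_gens r l (a : 'I_r -> nat) (s : seq (vec r)) : Prop :=
  exists B : 'I_r -> vec r, is_Zbasis l a B /\ uniq s /\
    (forall v, v \in s -> exists i, v = B i).

(* A fan Sigma (list of cones, each given by its generators) which is a smooth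
   fan in N_G refining Delta_G with the same support (proper birational),
   and whose ray generators (= primitive generators, as basis elements) all lie
   on the hyperplane <(1,..,1), v> = 1 (trivial discrepancy). *)
Definition crepant_full_resolution r l (a : 'I_r -> nat)
    (Sigma : seq (seq (vec r))) : Prop :=
  (forall s, s \in Sigma -> smooth_gens l a s) /\
  (forall s, s \in Sigma -> forall F, is_face F (cone s) ->
     exists t, t \in Sigma /\ (forall x, cone t x <-> F x)) /\
  (forall s t, s \in Sigma -> t \in Sigma ->
     is_face (fun x => cone s x /\ cone t x) (cone s) /\
     is_face (fun x => cone s x /\ cone t x) (cone t)) /\
  (forall x, orthant x <-> exists s, s \in Sigma /\ cone s x) /\
  (forall s, s \in Sigma -> forall v, v \in s -> \sum_i v 0 i = 1).

Definition wt (r alpha beta : nat) : 'I_r -> nat :=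
  fun i => if (i < r - 2)%N then 1%N else if (i == (r - 2)%N :> nat) then alpha else beta.

(* Let J be the r - 2 coordinates of weight 1, and d = gcd(alpha, beta, l).
   A point of N_G on the simplex sum x_i = 1 whose alpha- and beta-coordinates
   vanish has its J-coordinates congruent modulo Z, with d times each of them
   integral; hence it is a unit vector e_i unless all of them equal 1/(r-2),
   which forces r - 2 <= d.
   If 1 < d < r - 2, the cone of the resolution containing (1,...,1,0,0) thus
   has every e_i (i in J) as a ray.  The functional dual to e_i0 in a basis of
   that smooth cone is integral on N_G, yet takes the value 1/d on the lattice
   point (1/d,...,1/d,0,0).
   If d = 1, let t = gcd(alpha, l) and take the cone containing
   (1,...,1,0,1/(2t)).  A ray v with v_beta > 0 has t v_beta a positive
   integer, so the J-coordinates 1 of the point again force every e_i to be a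
   ray, and some ray has the form v = (x,...,x,0,h) with (r-2) x + h = 1, h > 0.
   The dual functional of e_i0 evaluated on the lattice point
   (1/t,...,1/t,0,-(r-2)/t) gives 1/(t h) in Z, so t h = 1 and
   t = (r-2) (t x) + 1 with t x a natural number. *)

From mathcomp Require Import all_boot all_order all_algebra.
From mathcomp Require Import zify ring lra.
Set Implicit Arguments. Unset Strict Implicit. Unset Printing Implicit Defensive.
Import Order.TTheory GRing.Theory Num.Theory.
Local Open Scope ring_scope.

Section IntegralElements.
Variable R : archiRealFieldType.
Implicit Types x y : R.

Lemma intr_ge1 x : x \is a Num.int -> 0 < x -> 1 <= x.
Proof. by move=> xZ x_gt0; rewrite -[x]gtr0_norm // norm_intr_ge1 // lt0r_neq0. Qed.

Lemma intrB_eq x y : 0 <= x < 1 -> 0 <= y < 1 -> x - y \is a Num.int -> x = y.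
Proof.
move=> /andP[x_ge0 x_lt1] /andP[y_ge0 y_lt1] xyZ.
have [/eqP|/(norm_intr_ge1 xyZ)] := eqVneq (x - y) 0; first by rewrite subr_eq0 => /eqP.
by rewrite ler_normr => /orP[]; lra.
Qed.

Lemma intr_gcdn_mul (m n : nat) x :
  m%:R * x \is a Num.int -> n%:R * x \is a Num.int -> (gcdn m n)%:R * x \is a Num.int.
Proof.
move=> mxZ nxZ; have [u [v uv]] := Bezoutz m n.
have -> : (gcdn m n)%:R = (gcdz m n)%:~R :> R by rewrite pmulrn.
rewrite -uv intrD !intrM mulrDl -!mulrA -!pmulrn.
by apply: rpredD; apply: rpredM => //; apply: intr_int.
Qed.

Lemma intr_natr_div (m d : nat) : (d %| m)%N -> m%:R / d%:R \is a @Num.int R.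
Proof.
case: d => [|d dvd_m]; first by rewrite dvd0n => /eqP->; rewrite mul0r int_num0.
by rewrite -natr_div ?natr_int // unitfE pnatr_eq0.
Qed.

End IntegralElements.

Lemma inNGP r l (a : 'I_r -> nat) (v : vec r) : (0 < l)%N ->
  inNG l a v <-> exists K : rat, l%:R * K \is a Num.int /\
    forall i, v 0 i - (a i)%:R * K \is a Num.int.
Proof.
move=> l_gt0; have l_neq0 : l%:R != 0 :> rat by rewrite pnatr_eq0 -lt0n.
split=> [[k vk] | [K [/intrP[k lK] vK]]].
  exists (k%:~R / l%:R); split; first by rewrite mulrC divfK ?intr_int.
  by move=> i; have [z ->] := vk i; rewrite (_ : _ - _ = z%:~R) ?intr_int //; field.
exists k => i; have /intrP[z vz] := vK i; exists z.
by rewrite -vz -lK; field.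
Qed.

Lemma dotv_sum r (I : finType) (c : vec r) (x : I -> rat) (B : I -> vec r) :
  dotv c (\sum_i x i *: B i) = \sum_i x i * dotv c (B i).
Proof.
rewrite /dotv; under eq_bigr => k _ do rewrite summxE mulr_sumr.
rewrite exchange_big /=; apply: eq_bigr => i _; rewrite mulr_sumr.
by apply: eq_bigr => k _; rewrite mxE mulrCA.
Qed.

Lemma dotv_delta r (c : vec r) i : dotv c (delta_mx 0 i) = c 0 i.
Proof.
rewrite /dotv (bigD1 i) //= mxE !eqxx mulr1 big1 ?addr0 // => j /negPf ji.
by rewrite mxE ji andbF mulr0.
Qed.

Lemma eq_delta_row (R : nzRingType) n (i j : 'I_n) :
  (delta_mx 0 i == delta_mx 0 j :> 'rV[R]_n) = (i == j).
Proof.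
apply/eqP/eqP => [/rowP/(_ i)|-> //]; rewrite !mxE !eqxx /=.
by have [//|_ /eqP] := eqVneq i j; rewrite oner_eq0.
Qed.

Lemma Zbasis_dual r l (a : 'I_r -> nat) (B : 'I_r -> vec r) j0 : is_Zbasis l a B ->
  exists c : vec r, (forall v, inNG l a v -> dotv c v \is a Num.int) /\
    forall j, dotv c (B j) = (j == j0)%:R.
Proof.
move=> [_ [B_free B_span]]; set M := \matrix_(i < r) B i.
have M_unit : M \in unitmx by rewrite -row_free_unit.
pose c : vec r := \row_i invmx M i j0.
have cB j : dotv c (B j) = (j == j0)%:R.
  have -> : (j == j0)%:R = (M *m invmx M) j j0 by rewrite mulmxV // mxE.
  by rewrite mxE; apply: eq_bigr => k _; rewrite !mxE mulrC.
exists c; split=> // v /B_span[z ->].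
rewrite dotv_sum (bigD1 j0) //= cB eqxx mulr1 big1 ?addr0 ?intr_int // => j /negPf ne.
by rewrite cB ne mulr0.
Qed.

Lemma smooth_gens_dual r l (a : 'I_r -> nat) s w : smooth_gens l a s -> w \in s ->
  exists c : vec r, (forall v, inNG l a v -> dotv c v \is a Num.int) /\
    forall v, v \in s -> dotv c v = (v == w)%:R.
Proof.
move=> [B [BZ [_ sB]]] /sB[j0 ->]; have [c [cZ cB]] := Zbasis_dual j0 BZ.
exists c; split=> // _ /sB[j ->]; rewrite cB.
have [<-|ne] := eqVneq j j0; first by rewrite !eqxx.
case: eqP => [Bj|//].
by have := cB j; rewrite Bj cB eqxx (negPf ne) => /eqP; rewrite oner_eq0.
Qed.

Lemma orthant_coord_le1 r (v : vec r) i : orthant v -> \sum_k v 0 k = 1 -> v 0 i <= 1.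
Proof.
move=> v_ge0 <-; rewrite (bigD1 i) //= lerDl; exact: sumr_ge0.
Qed.

Lemma orthant_coord2_le1 r (v : vec r) i j : i != j -> orthant v -> \sum_k v 0 k = 1 ->
  v 0 i + v 0 j <= 1.
Proof.
move=> ij v_ge0 <-; rewrite (bigD1 i) //= (bigD1 j) 1?eq_sym //= addrA lerDl.
exact: sumr_ge0.
Qed.

Lemma congruent_simplex_point_unit r (J : {set 'I_r}) (d : nat) (v : vec r) :
  (0 < d < #|J|)%N -> orthant v -> \sum_i v 0 i = 1 ->
  (forall i, i \notin J -> v 0 i = 0) ->
  (forall i j, i \in J -> j \in J -> v 0 i - v 0 j \is a Num.int) ->
  (forall i, i \in J -> d%:R * v 0 i \is a Num.int) ->
  exists2 i, i \in J & v = delta_mx 0 i.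
Proof.
move=> /andP[d_gt0 d_ltJ] v_ge0 v_sum v_offJ vJ_congr vJ_d.
have [/exists_inP[i iJ /eqP vi1]|no1] := boolP [exists i in J, v 0 i == 1].
  exists i => //; apply/rowP => j; rewrite !mxE eqxx /=.
  have [-> //|ji] := eqVneq j i.
  rewrite /=; have := orthant_coord2_le1 ji v_ge0 v_sum; have := v_ge0 j.
  by rewrite vi1; lra.
have vJ_lt1 i : i \in J -> 0 <= v 0 i < 1.
  move=> iJ; rewrite v_ge0 lt_neqAle orthant_coord_le1 // andbT.
  by apply: contra no1 => vi1; apply/exists_inP; exists i.
have /card_gt0P[i0 i0J] : (0 < #|J|)%N by lia.
have vJ_eq i : i \in J -> v 0 i = v 0 i0.
  by move=> iJ; apply: intrB_eq; rewrite ?vJ_lt1 ?vJ_congr.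
have Jv1 : #|J|%:R * v 0 i0 = 1.
  rewrite -[RHS]v_sum (bigID (mem J)) /= [X in _ + X]big1 ?addr0 => [|i /v_offJ //].
  by rewrite mulr_natl (eq_bigr (fun=> v 0 i0) vJ_eq) sumr_const.
have vi0_gt0 : 0 < v 0 i0.
  by move: (@ltr01 rat); rewrite -Jv1 pmulr_rgt0 // ltr0n; lia.
have : 1 <= d%:R * v 0 i0 by apply: intr_ge1; rewrite ?vJ_d ?mulr_gt0 ?ltr0n.
by rewrite -[X in X <= _]Jv1 ler_pM2r // ler_nat leqNgt d_ltJ.
Qed.

Section ConicCombination.
Variables (r : nat) (s : seq (vec r)) (c : 'I_(size s) -> rat) (p : vec r).
Hypothesis s_ge0 : forall j : 'I_(size s), orthant s`_j.
Hypothesis c_ge0 : forall j, 0 <= c j.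
Hypothesis p_comb : p = \sum_j c j *: s`_j.

Lemma comb_coord k : p 0 k = \sum_j c j * s`_j 0 k.
Proof. by rewrite p_comb summxE; apply: eq_bigr => j _; rewrite mxE. Qed.

Let term_ge0 k j : true -> 0 <= c j * s`_j 0 k.
Proof. by move=> _; apply: mulr_ge0; [apply: c_ge0 | apply: s_ge0]. Qed.

Lemma comb_coord_eq0 k j : p 0 k = 0 -> 0 < c j -> s`_j 0 k = 0.
Proof.
rewrite comb_coord => /(psumr_eq0P (term_ge0 k)) /(_ j isT) /eqP cs0 cj_gt0.
by apply/eqP; move: cs0; rewrite mulf_eq0 gt_eqF.
Qed.

Lemma comb_coord_gt0 k : 0 < p 0 k -> exists j, 0 < c j /\ 0 < s`_j 0 k.
Proof.
rewrite comb_coord => /lt0r_neq0/eqP/(psumr_neq0P (term_ge0 k))[j /= cs_gt0].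
have cj_gt0 : 0 < c j.
  by rewrite lt0r c_ge0 andbT; apply: contraTneq cs_gt0 => ->; rewrite mul0r ltxx.
by exists j; split=> //; rewrite -(pmulr_rgt0 _ cj_gt0).
Qed.

Lemma comb_mem_delta i k (lambda : rat) :
  (forall j, 0 < c j -> s`_j != delta_mx 0 i -> s`_j 0 i <= lambda * s`_j 0 k) ->
  lambda * p 0 k < p 0 i -> delta_mx 0 i \in s.
Proof.
move=> dom; apply: contraTT => ei_notin.
rewrite -leNgt !comb_coord mulr_sumr; apply: ler_sum => j _.
have := c_ge0 j; rewrite le_eqVlt => /predU1P[<-|cj_gt0]; first by rewrite !mul0r mulr0.
rewrite mulrCA ler_pM2l // dom //; apply: contraNneq ei_notin => <-.
by rewrite mem_nth.
Qed.

End ConicCombination.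

Section Resolution.
Variables (r l : nat) (a : 'I_r -> nat) (Sigma : seq (seq (vec r))).
Hypothesis res : crepant_full_resolution l a Sigma.

Lemma resolution_gen s v : s \in Sigma -> v \in s ->
  [/\ inNG l a v, orthant v & \sum_i v 0 i = 1].
Proof.
have [smooth [_ [_ [support crepant]]]] := res.
move=> sS vs; split; last exact: crepant s sS v vs.
  by have [B [[BZ _] [_ sB]]] := smooth s sS; have [i ->] := sB v vs; apply: BZ.
apply/support; exists s; split=> //.
have v_idx : (index v s < size s)%N by rewrite index_mem.
exists (fun j => (j == Ordinal v_idx)%:R); split=> [j|]; first by rewrite ler0n.
rewrite (bigD1 (Ordinal v_idx)) //= eqxx scale1r big1 ?addr0 ?nth_index // => j /negPf->.
by rewrite scale0r.
Qed.

Lemma resolution_cover p : orthant p ->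
  exists s (c : 'I_(size s) -> rat), [/\ s \in Sigma, smooth_gens l a s,
    forall j : 'I_(size s), orthant s`_j, forall j, 0 <= c j & p = \sum_j c j *: s`_j].
Proof.
have [smooth [_ [_ [support _]]]] := res.
move=> /support[s [sS [c [c_ge0 p_comb]]]]; exists s, c; split=> //; first exact: smooth.
by move=> j; have [] := resolution_gen sS (mem_nth 0 (ltn_ord j)).
Qed.

End Resolution.

Section TwoWeights.
Variables (r l : nat) (a : 'I_r -> nat) (ia ib : 'I_r) (Sigma : seq (seq (vec r))).
Hypotheses (l_gt0 : (0 < l)%N) (ia_neq_ib : ia != ib).
Hypothesis a_off : forall i, i != ia -> i != ib -> a i = 1%N.
Hypothesis res : crepant_full_resolution l a Sigma.

Local Notation J := (~: [set ia; ib]).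
Local Notation D := (gcdn (gcdn (a ia) (a ib)) l).

Lemma in_J i : (i \in J) = (i != ia) && (i != ib).
Proof. by rewrite !inE negb_or. Qed.

Let a_J i : i \in J -> a i = 1%N.
Proof. by rewrite in_J => /andP[]; apply: a_off. Qed.

Lemma sum_J (F : 'I_r -> rat) : \sum_i F i = \sum_(i in J) F i + F ia + F ib.
Proof.
rewrite (bigD1 ia) //= (bigD1 ib) 1?eq_sym //= addrCA addrC [_ + F ia]addrC.
by congr (_ + _ + _); apply: eq_bigl => i; rewrite in_J andbC.
Qed.

Lemma dotv_dual_J (c v : vec r) i0 : i0 \in J ->
    (forall i, i \in J -> c 0 i = (i == i0)%:R) ->
  dotv c v = v 0 i0 + c 0 ia * v 0 ia + c 0 ib * v 0 ib.
Proof.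
move=> i0J cJ; rewrite /dotv sum_J (bigD1 i0) //= cJ // eqxx mul1r big1 ?addr0 //.
by move=> i /andP[iJ /negPf ne]; rewrite cJ // ne mul0r.
Qed.

Definition rowJ (x y : rat) : vec r :=
  \row_i (if i \in J then x else if i == ib then y else 0).

Lemma rowJ_J x y i : i \in J -> rowJ x y 0 i = x.
Proof. by rewrite mxE => ->. Qed.

Lemma rowJ_ia x y : rowJ x y 0 ia = 0.
Proof. by rewrite mxE in_J eqxx (negPf ia_neq_ib). Qed.

Lemma rowJ_ib x y : rowJ x y 0 ib = y.
Proof. by rewrite mxE in_J !eqxx andbF. Qed.

Lemma rowJ_orthant x y : 0 <= x -> 0 <= y -> orthant (rowJ x y).
Proof. by move=> x_ge0 y_ge0 i; rewrite mxE; case: ifP => // _; case: ifP. Qed.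

Lemma dual_rowJ_int (c : vec r) i0 (t : nat) y : i0 \in J ->
    (forall i, i \in J -> c 0 i = (i == i0)%:R) ->
    (forall v, inNG l a v -> dotv c v \is a Num.int) ->
    (t %| l)%N -> (t %| a ia)%N -> y - (a ib)%:R / t%:R \is a Num.int ->
  t%:R^-1 + c 0 ib * y \is a Num.int.
Proof.
move=> i0J cJ cZ tl ta yZ.
suff /cZ : inNG l a (rowJ t%:R^-1 y).
  by rewrite (dotv_dual_J _ i0J cJ) rowJ_J // rowJ_ia rowJ_ib mulr0 addr0.
apply/(inNGP _ _ l_gt0); exists t%:R^-1; split; first exact: intr_natr_div.
move=> i; have [iJ|] := boolP (i \in J).
  by rewrite rowJ_J // a_J // mul1r subrr rpred0.
rewrite in_J negb_and !negbK => /orP[] /eqP->; last by rewrite rowJ_ib.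
by rewrite rowJ_ia sub0r rpredN intr_natr_div.
Qed.

Lemma gen_ia0_ib0_unit s v : (D < #|J|)%N -> s \in Sigma -> v \in s ->
  v 0 ia = 0 -> v 0 ib = 0 -> exists2 i, i \in J & v = delta_mx 0 i.
Proof.
move=> D_lt sS vs via vib; have [vN v_ge0 v_sum] := resolution_gen res sS vs.
have [K [lK vK]] := (inNGP _ _ l_gt0).1 vN.
have aK i : v 0 i = 0 -> (a i)%:R * K \is a Num.int.
  by move=> vi0; have := vK i; rewrite vi0 sub0r rpredN.
have DK : D%:R * K \is a Num.int by do 2!apply: intr_gcdn_mul => //; apply: aK.
have vJK i : i \in J -> v 0 i - K \is a Num.int.
  by move=> iJ; have := vK i; rewrite a_J // mul1r.
apply: (congruent_simplex_point_unit (d := D)) => //.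
- by rewrite D_lt gcdn_gt0 l_gt0 orbT.
- by move=> i; rewrite in_J negb_and !negbK => /orP[] /eqP->.
- move=> i j iJ jJ; have -> : v 0 i - v 0 j = (v 0 i - K) - (v 0 j - K) by ring.
  by rewrite rpredB ?vJK.
- move=> i iJ; have -> : D%:R * v 0 i = D%:R * (v 0 i - K) + D%:R * K by ring.
  by rewrite rpredD ?vJK // rpredM ?natr_int ?vJK.
Qed.

Lemma rowJ_cone_units y lambda s (c : 'I_(size s) -> rat) :
    (D < #|J|)%N -> s \in Sigma ->
    (forall j : 'I_(size s), orthant s`_j) -> (forall j, 0 <= c j) ->
    rowJ 1 y = \sum_j c j *: s`_j -> lambda * y < 1 ->
    (forall j, 0 < c j -> 0 < s`_j 0 ib -> 1 <= lambda * s`_j 0 ib) ->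
  forall i, i \in J -> delta_mx 0 i \in s.
Proof.
move=> D_lt sS s_ge0 c_ge0 p_comb lam_y dom i iJ.
apply: (comb_mem_delta c_ge0 p_comb (k := ib) (lambda := lambda)); last first.
  by rewrite rowJ_ib rowJ_J.
move=> j cj_gt0 vj_neq; have vs : s`_j \in s by rewrite mem_nth.
have via : s`_j 0 ia = 0.
  by apply: (comb_coord_eq0 s_ge0 c_ge0 p_comb) => //; rewrite rowJ_ia.
have := s_ge0 j ib; rewrite le_eqVlt => /predU1P[vib0|vib_gt0].
  have [i' _ vj] := gen_ia0_ib0_unit D_lt sS vs via (esym vib0).
  move: vj_neq; rewrite -vib0 mulr0 vj eq_delta_row => /negPf ne.
  by rewrite mxE eq_sym ne.
apply: (le_trans _ (dom j cj_gt0 vib_gt0)).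
by have [_ v_ge0 v_sum] := resolution_gen res sS vs; apply: orthant_coord_le1.
Qed.

Lemma resolution_gcd_extreme : (D <= 1)%N || (#|J| <= D)%N.
Proof.
case: (leqP D 1) => //= D_gt1; rewrite leqNgt; apply/negP => D_lt.
have [s [c [sS s_smooth s_ge0 c_ge0 p_comb]]] :=
  resolution_cover res (rowJ_orthant ler01 (lexx 0)).
have eJ : forall i, i \in J -> delta_mx 0 i \in s.
  apply: (rowJ_cone_units (lambda := 0) D_lt sS s_ge0 c_ge0 p_comb).
    by rewrite mul0r ltr01.
  move=> j cj_gt0; rewrite (comb_coord_eq0 s_ge0 c_ge0 p_comb) ?rowJ_ib // ltxx.
have /card_gt0P[i0 i0J] := leq_ltn_trans (leq0n _) D_lt.
have [c' [c'Z c's]] := smooth_gens_dual s_smooth (eJ i0 i0J).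
have c'J i : i \in J -> c' 0 i = (i == i0)%:R.
  by move=> iJ; rewrite -dotv_delta c's ?eJ // eq_delta_row.
have D_ia : (D %| a ia)%N := dvdn_trans (dvdn_gcdl _ _) (dvdn_gcdl _ _).
have D_ib : (D %| a ib)%N := dvdn_trans (dvdn_gcdl _ _) (dvdn_gcdr _ _).
have := dual_rowJ_int (y := 0) i0J c'J c'Z (dvdn_gcdr _ _) D_ia.
rewrite sub0r rpredN intr_natr_div // mulr0 addr0 => /(_ isT) /intr_ge1.
have D_gt0 : (0 < D)%N := ltn_trans (ltnSn 0) D_gt1.
by rewrite invr_gt0 ltr0n D_gt0 invf_ge1 ?ltr0n // lern1 leqNgt D_gt1 => /(_ isT).
Qed.

Section GcdOne.
Hypothesis D1 : D = 1%N.
Hypothesis l_sum : l = (a ia + a ib + #|J|)%N.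
Hypothesis J_gt1 : (1 < #|J|)%N.

Local Notation t := (gcdn (a ia) l).

Let t_gt0 : (0 < t)%N.
Proof. by rewrite gcdn_gt0 l_gt0 orbT. Qed.

Lemma gen_ia0_int s v : s \in Sigma -> v \in s -> v 0 ia = 0 ->
  [/\ t%:R * v 0 ib \is a Num.int,
      forall i, i \in J -> t%:R * v 0 i \is a Num.int &
      forall i j, i \in J -> j \in J -> v 0 i - v 0 j \is a Num.int].
Proof.
move=> sS vs via; have [vN _ _] := resolution_gen res sS vs.
have [K [lK vK]] := (inNGP _ _ l_gt0).1 vN.
have tK : t%:R * K \is a Num.int.
  by apply: intr_gcdn_mul lK; have := vK ia; rewrite via sub0r rpredN.
have vJK i : i \in J -> v 0 i - K \is a Num.int.
  by move=> iJ; have := vK i; rewrite a_J // mul1r.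
split.
- have -> : t%:R * v 0 ib = t%:R * (v 0 ib - (a ib)%:R * K) + (a ib)%:R * (t%:R * K).
    by ring.
  by rewrite rpredD // rpredM ?natr_int ?vK.
- move=> i iJ; have -> : t%:R * v 0 i = t%:R * (v 0 i - K) + t%:R * K by ring.
  by rewrite rpredD // rpredM ?natr_int ?vJK.
- move=> i j iJ jJ; have -> : v 0 i - v 0 j = (v 0 i - K) - (v 0 j - K) by ring.
  by rewrite rpredB ?vJK.
Qed.

Lemma gen_ia0_coords s v i0 : s \in Sigma -> v \in s -> v 0 ia = 0 -> 0 < v 0 ib ->
    i0 \in J ->
  (forall i, i \in J -> v 0 i = v 0 i0) /\ #|J|%:R * v 0 i0 + v 0 ib = 1.
Proof.
move=> sS vs via vib_gt0 i0J.
have [_ v_ge0 v_sum] := resolution_gen res sS vs.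
have [_ _ vJ_congr] := gen_ia0_int sS vs via.
have vJ_lt1 i : i \in J -> 0 <= v 0 i < 1.
  rewrite in_J => /andP[_ i_neq_ib]; rewrite v_ge0 /=.
  by have := orthant_coord2_le1 i_neq_ib v_ge0 v_sum; lra.
have vJ_eq i : i \in J -> v 0 i = v 0 i0.
  by move=> iJ; apply: intrB_eq; rewrite ?vJ_lt1 ?vJ_congr.
split=> //; rewrite -[RHS]v_sum sum_J via addr0 mulr_natl.
by rewrite (eq_bigr (fun=> v 0 i0) vJ_eq) sumr_const.
Qed.

Lemma gen_ia0_tmul_ib s v : s \in Sigma -> smooth_gens l a s ->
    (forall i, i \in J -> delta_mx 0 i \in s) ->
    v \in s -> v 0 ia = 0 -> 0 < v 0 ib -> t%:R * v 0 ib = 1.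
Proof.
move=> sS s_smooth eJ vs via vib_gt0.
have /card_gt0P[i0 i0J] := ltnW J_gt1.
have [c [cZ cs]] := smooth_gens_dual s_smooth (eJ i0 i0J).
have cJ i : i \in J -> c 0 i = (i == i0)%:R.
  by move=> iJ; rewrite -dotv_delta cs ?eJ // eq_delta_row.
have [_ v_sum] := gen_ia0_coords sS vs via vib_gt0 i0J.
have cv : c 0 ib * v 0 ib = - v 0 i0.
  have v_neq : (v == delta_mx 0 i0) = false.
    apply: contraTF vib_gt0 => /eqP->; rewrite mxE.
    by move: i0J; rewrite in_J => /andP[_ /negPf]; rewrite eq_sym => ->; rewrite ltxx.
  have := cs v vs; rewrite (dotv_dual_J _ i0J cJ) via mulr0 addr0 v_neq => /eqP.
  by rewrite addrC addr_eq0 => /eqP.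
have tJ_dvd : (t %| #|J| + a ib)%N.
  by rewrite (_ : #|J| + a ib = l - a ia)%N ?dvdn_sub ?dvdn_gcdl ?dvdn_gcdr //; lia.
have := dual_rowJ_int (y := - (#|J|%:R / t%:R)) i0J cJ cZ (dvdn_gcdr _ _) (dvdn_gcdl _ _).
rewrite -opprD -mulrDl -natrD rpredN intr_natr_div // => /(_ isT).
have vib_neq0 : v 0 ib != 0 := lt0r_neq0 vib_gt0.
have t_neq0 : t%:R != 0 :> rat by rewrite pnatr_eq0 -lt0n.
have -> : t%:R^-1 + c 0 ib * - (#|J|%:R / t%:R) = (t%:R * v 0 ib)^-1.
  rewrite -[c 0 ib](mulfK vib_neq0) cv -[X in _ = X]div1r -[X in X / (_ * _)]v_sum.
  by field; rewrite t_neq0 vib_neq0.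
move=> inv_tvZ; have [tvZ _ _] := gen_ia0_int sS vs via.
have tv_ge1 : 1 <= t%:R * v 0 ib by apply: intr_ge1 tvZ _; rewrite mulr_gt0 ?ltr0n.
have tv_gt0 : 0 < t%:R * v 0 ib := lt_le_trans ltr01 tv_ge1.
have := intr_ge1 inv_tvZ; rewrite invr_gt0 tv_gt0 invf_ge1 // => /(_ isT) tv_le1.
by apply/eqP; rewrite eq_le tv_le1.
Qed.

Lemma resolution_gcd1_mod : (t %% #|J|)%N = 1%N.
Proof.
have y_ge0 : 0 <= (2 * t%:R)^-1 :> rat by rewrite invr_ge0 mulr_ge0 ?ler0n.
have [s [c [sS s_smooth s_ge0 c_ge0 p_comb]]] :=
  resolution_cover res (rowJ_orthant ler01 y_ge0).
have gen_ia0 j : 0 < c j -> s`_j 0 ia = 0.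
  by move=> cj_gt0; apply: (comb_coord_eq0 s_ge0 c_ge0 p_comb) => //; rewrite rowJ_ia.
have eJ : forall i, i \in J -> delta_mx 0 i \in s.
  apply: (rowJ_cone_units (lambda := t%:R) _ sS s_ge0 c_ge0 p_comb).
  - by rewrite D1.
  - by rewrite invfM mulrCA divff ?mulr1 ?invf_lt1 ?ltr1n // pnatr_eq0 -lt0n.
  move=> j cj_gt0 vib_gt0.
  have [tvZ _ _] := gen_ia0_int sS (mem_nth 0 (ltn_ord j)) (gen_ia0 j cj_gt0).
  by apply: intr_ge1 tvZ _; rewrite mulr_gt0 ?ltr0n.
have [j [cj_gt0 vib_gt0]] : exists j, 0 < c j /\ 0 < s`_j 0 ib.
  by apply: (comb_coord_gt0 s_ge0 c_ge0 p_comb); rewrite rowJ_ib invr_gt0 mulr_gt0 ?ltr0n.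
have vs := mem_nth 0 (ltn_ord j); have via := gen_ia0 j cj_gt0.
have tv1 := gen_ia0_tmul_ib sS s_smooth eJ vs via vib_gt0.
have /card_gt0P[i0 i0J] := ltnW J_gt1.
have [_ v_sum] := gen_ia0_coords sS vs via vib_gt0 i0J.
have [_ tvJ _] := gen_ia0_int sS vs via.
have /natrP[N tvN] : t%:R * s`_j 0 i0 \is a Num.nat.
  by rewrite natrEint tvJ // mulr_ge0 ?ler0n ?s_ge0.
have -> : t = (N * #|J|).+1.
  apply/eqP; rewrite -(eqr_nat rat) -natr1 natrM -tvN -[X in _ + X]tv1.
  by rewrite mulrAC -mulrA -mulrDr v_sum mulr1.
by rewrite -addn1 modnMDl modn_small.
Qed.

End GcdOne.

End TwoWeights.

Lemma card_setC2 n (x y : 'I_n) : x != y -> #|~: [set x; y]| = (n - 2)%N.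
Proof. by move=> xy; have := cardsC [set x; y]; rewrite cards2 xy card_ord; lia. Qed.

Lemma dvdn_gcdn_sum (x y m : nat) : (gcdn (gcdn x y) (x + y + m) %| m)%N.
Proof.
have dx : (gcdn (gcdn x y) (x + y + m) %| x)%N := dvdn_trans (dvdn_gcdl _ _) (dvdn_gcdl _ _).
have dy : (gcdn (gcdn x y) (x + y + m) %| y)%N := dvdn_trans (dvdn_gcdl _ _) (dvdn_gcdr _ _).
by rewrite -(dvdn_addr m (dvdn_add dx dy)) dvdn_gcdr.
Qed.

Lemma wt_off r alpha beta (i : 'I_r) :
  (i : nat) != (r - 2)%N -> (i : nat) != (r - 1)%N -> @wt r alpha beta i = 1%N.
Proof.
move=> ne2 ne1; rewrite /wt (negPf ne2); case: ltnP => // ge.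
by have := ltn_ord i; lia.
Qed.

Theorem lemma6p20 (r l alpha beta : nat) :
  (4 <= r)%N -> (r <= l)%N -> (alpha + beta = l - (r - 2))%N ->
  (exists Sigma, @crepant_full_resolution r l (@wt r alpha beta) Sigma) ->
  (gcdn (gcdn alpha beta) l = 1 \/ gcdn (gcdn alpha beta) l = r - 2)%N /\
  (gcdn (gcdn alpha beta) l = 1%N ->
     gcdn alpha l %% (r - 2) = 1 /\ gcdn beta l %% (r - 2) = 1)%N.
Proof.
move=> r4 rl ab_sum [Sigma res].
have l_gt0 : (0 < l)%N by lia.
have [ia_lt ib_lt] : (r - 2 < r)%N /\ (r - 1 < r)%N by lia.
pose ia := Ordinal ia_lt; pose ib := Ordinal ib_lt.
have ia_neq_ib : ia != ib by rewrite -val_eqE /=; lia.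
have ib_neq_ia : ib != ia by rewrite eq_sym.
have a_off i : i != ia -> i != ib -> @wt r alpha beta i = 1%N.
  by rewrite -!val_eqE; apply: wt_off.
have wt_ia : @wt r alpha beta ia = alpha by rewrite /wt /= ltnn eqxx.
have wt_ib : @wt r alpha beta ib = beta by rewrite /wt /= !ifF //; lia.
have d_le : (gcdn (gcdn alpha beta) l <= r - 2)%N.
  by apply: dvdn_leq; [lia | rewrite (_ : l = alpha + beta + (r - 2))%N ?dvdn_gcdn_sum //; lia].
have d_gt0 : (0 < gcdn (gcdn alpha beta) l)%N by rewrite gcdn_gt0 l_gt0 orbT.
split.
  have := resolution_gcd_extreme l_gt0 ia_neq_ib a_off res.
  by rewrite wt_ia wt_ib card_setC2 // => /orP[]; lia.
move=> d1; split.
  have := resolution_gcd1_mod l_gt0 ia_neq_ib a_off res.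
  by rewrite wt_ia wt_ib card_setC2 //; apply=> //; lia.
have := resolution_gcd1_mod l_gt0 ib_neq_ia (fun i ib' ia' => a_off i ia' ib') res.
by rewrite wt_ia wt_ib card_setC2 // [gcdn beta alpha]gcdnC; apply=> //; lia.
Qed.
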